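(* There is no final $F$-coalgebra in $\mathbf{Met_3}^{L}$.
   Context: A tripointed metric space is a set with three distinct points $T,L,R$ and a metric bounded by $1$ in which $T,L,R$ have pairwise distance $1$. $\mathbf{Met_3}^{L}$: tripointed metric spaces with Lipschitz maps preserving $T,L,R$. Let $M=\{a,b,c\}$. For a tripointed metric space $X$, $M\times X$ has metric $d((m,x),(n,y))=\tfrac12d(x,y)$ if $m=n$ and $1$ otherwise; $M\otimes X$ is the quotient metric space by the equivalence relation generated by $(b,T)\sim(a,L)$, $(a,R)\sim(c,T)$, $(c,L)\sim(b,R)$, with elements $m\otimes x$ and distinguished points $a\otimes T,b\otimes L,c\otimes R$; $F=M\otimes-$ with $(M\otimes f)(m\otimes x)=m\otimes f(x)$. A coalgebra is $(X,e\colon X\to FX)$ with $e$ a morphism; a coalgebra morphism $h\colon(A,\alpha)\to(B,\beta)$ satisfies $\beta\circ h=Fh\circ\alpha$; a coalgebra is final if every coalgebra has a unique coalgebra morphism into it. *)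

From Stdlib Require Import Rdefinitions Relations.
From HB Require Import structures.
From mathcomp Require Import all_boot all_order all_algebra.
From mathcomp Require Import boolp classical_sets reals Rstruct.
Set Implicit Arguments. Unset Strict Implicit. Unset Printing Implicit Defensive.
Import Order.TTheory GRing.Theory Num.Theory.
Local Open Scope ring_scope.
Local Open Scope classical_set_scope.

Notation R := Rdefinitions.R.

Record tmet := TMet {
  carrier :> Type;
  dist : carrier -> carrier -> R;
  pT : carrier; pL : carrier; pR : carrier;
  dist_ge0 : forall x y, 0 <= dist x y;
  dist_eq0 : forall x y, dist x y = 0 <-> x = y;
  dist_sym : forall x y, dist x y = dist y x;
  dist_tri : forall x y z, dist x z <= dist x y + dist y z;
  dist_le1 : forall x y, dist x y <= 1;
  dist_TL : dist pT pL = 1;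
  dist_LR : dist pL pR = 1;
  dist_TR : dist pT pR = 1;
  pts_distinct : pT <> pL /\ pL <> pR /\ pT <> pR }.

Definition lipschitz (X Y : Type) (dX : X -> X -> R) (dY : Y -> Y -> R) (f : X -> Y) :=
  exists K : R, 0 <= K /\ forall x y, dY (f x) (f y) <= K * dX x y.

Definition is_mor (X Y : tmet) (f : X -> Y) : Prop :=
  lipschitz (@dist X) (@dist Y) f /\
  f (pT X) = pT Y /\ f (pL X) = pL Y /\ f (pR X) = pR Y.

Inductive M := Ma | Mb | Mc.
Definition eqM (m n : M) : bool :=
  match m, n with Ma, Ma | Mb, Mb | Mc, Mc => true | _, _ => false end.

Definition dprod (X : tmet) (p q : M * X) : R :=
  if eqM p.1 q.1 then dist p.2 q.2 / 2 else 1.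

Definition glue_gen (X : tmet) (p q : M * X) : Prop :=
  (p = (Mb, pT X) /\ q = (Ma, pL X)) \/
  (p = (Ma, pR X) /\ q = (Mc, pT X)) \/
  (p = (Mc, pL X) /\ q = (Mb, pR X)).

(* the equivalence relation generated; elements of M (x) X are its classes,
   represented here by elements of M * X; m (x) x is the class of (m, x). *)
Definition glue (X : tmet) : M * X -> M * X -> Prop :=
  clos_refl_sym_trans _ (@glue_gen X).

Fixpoint chain (X : tmet) (p : M * X) (l : list ((M * X) * (M * X))) (q : M * X) : Prop :=
  match l with
  | nil => glue p q
  | (x, y) :: l' => glue p x /\ chain y l' q
  end.

Fixpoint chain_cost (X : tmet) (l : list ((M * X) * (M * X))) : R :=
  match l with
  | nil => 0
  | (x, y) :: l' => dprod x y + chain_cost l'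
  end.

(* The quotient metric on M (x) X (evaluated on representatives). *)
Definition dtens (X : tmet) (p q : M * X) : R :=
  inf [set c : R | exists l, chain p l q /\ c = chain_cost l].

Definition Fmap (X Y : tmet) (f : X -> Y) (p : M * X) : M * Y := (p.1, f p.2).

(* e : X -> F X is a morphism of Met_3^L (distinguished points of F X are
   a(x)T, b(x)L, c(x)R); e is given by representatives in M * X. *)
Definition is_Fmor (X : tmet) (e : X -> M * X) : Prop :=
  lipschitz (@dist X) (@dtens X) e /\
  glue (e (pT X)) (Ma, pT X) /\ glue (e (pL X)) (Mb, pL X) /\
  glue (e (pR X)) (Mc, pR X).

Record coalg := Coalg {
  cobj : tmet;
  cstr : cobj -> M * cobj;
  cstr_mor : is_Fmor cstr }.

(* coalgebra morphisms: beta o h = F h o alpha (equality in F B) *)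
Definition coalg_mor (A B : coalg) (h : cobj A -> cobj B) : Prop :=
  is_mor h /\ forall x, glue (@cstr B (h x)) (Fmap h (@cstr A x)).

Definition final (Z : coalg) : Prop :=
  forall A : coalg, exists h : cobj A -> cobj Z,
    coalg_mor (A:=A) (B:=Z) h /\ forall h', coalg_mor (A:=A) (B:=Z) h' -> forall x, h' x = h x.

From Stdlib Require Import Rdefinitions Relations.
From HB Require Import structures.
From mathcomp Require Import all_boot all_order all_algebra.
From mathcomp Require Import reals Rstruct lra.
Set Implicit Arguments. Unset Strict Implicit. Unset Printing Implicit Defensive.
Import Order.TTheory GRing.Theory Num.Theory.
Local Open Scope ring_scope.

(* For 0 < r <= 1, let A_r be the coalgebra on the points T, R, L = x_0, x_1, ...
   with d(p, q) = max (w p) (w q) for p <> q, where w T = 0, w R = 1 and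
   w x_n = r^n, and where x_(n+1) unfolds to a (x) x_n.  Let Z be a coalgebra
   whose structure map is K-Lipschitz and h : A_r -> Z a coalgebra morphism.
   In M (x) Z the copy a (x) Z is entered only through a (x) L and a (x) R, both
   at distance 1/2 from a (x) T, so d(h x_n, T) <= 2K d(h x_(n+1), T) and hence
   d(h x_n, T) >= (2K)^-n.  Since h is Lipschitz, the same distance is at most
   Lip(h) r^n, which is absurd for r <= 1/(4K) and n large. *)

Lemma clos_rst_congr (A B : Type) (g : relation A) (f : A -> B) :
  (forall x y, g x y -> f x = f y) ->
  forall x y, clos_refl_sym_trans A g x y -> f x = f y.
Proof. by move=> fg x y; elim=> [u v /fg|//|u v _ ->|u v w _ -> _ ->]. Qed.

Lemma dprod_ge0 (X : tmet) (p q : M * X) : 0 <= dprod p q.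
Proof. by rewrite /dprod; case: eqM => //; rewrite divr_ge0 ?dist_ge0. Qed.

Lemma chain_cost_ge0 (X : tmet) (l : seq ((M * X) * (M * X))) :
  0 <= chain_cost l.
Proof. by elim: l => [|[p q] l IHl] //=; rewrite addr_ge0 ?dprod_ge0. Qed.

Lemma chain1 (X : tmet) (p q : M * X) : chain p [:: (p, q)] q.
Proof. by split; exact: rst_refl. Qed.

Lemma dtens_le_dprod (X : tmet) (p q : M * X) : dtens p q <= dprod p q.
Proof.
apply: ge_inf; first by exists 0 => _ [l [_ ->]]; exact: chain_cost_ge0.
by exists [:: (p, q)]; split; [exact: chain1 | exact/esym/addr0].
Qed.

Section GlueInvariantLowerBound.
Variables (X : tmet) (f : M * X -> R).
Hypothesis f_glue : forall p q, glue_gen p q -> f p = f q.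
Hypothesis f_dprod : forall p q, f p - f q <= dprod p q.

Lemma chain_cost_ge l p q : chain p l q -> f p - f q <= chain_cost l.
Proof.
elim: l p => [|[x y] l IHl] p /=.
  by move/(clos_rst_congr f_glue) => ->; rewrite subrr.
case=> /(clos_rst_congr f_glue) -> /IHl fyq.
have -> : f x - f q = (f x - f y) + (f y - f q) by rewrite addrA subrK.
exact: lerD.
Qed.

Lemma dtens_ge p q : f p - f q <= dtens p q.
Proof.
apply: lb_le_inf; last by move=> _ [l [pq ->]]; exact: chain_cost_ge.
by exists (dprod p q), [:: (p, q)]; split; [exact: chain1 | exact/esym/addr0].
Qed.

End GlueInvariantLowerBound.

(* Here and below, real-valued definitions omit their result type [R]: it would
   put their bodies in Stdlib's R_scope ([Rdiv], [IZR]) instead of ring_scope. *)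
Definition dist_aT (X : tmet) (p : M * X) :=
  if p.1 is Ma then dist p.2 (pT X) / 2 else 1 / 2.

Lemma dist_aT_glue (X : tmet) (p q : M * X) :
  glue_gen p q -> dist_aT p = dist_aT q.
Proof.
case=> [[-> ->]|[[-> ->]|[-> ->]]]; rewrite /dist_aT //=.
- by rewrite dist_sym dist_TL.
- by rewrite dist_sym dist_TR.
Qed.

Lemma dist_aT_dprod (X : tmet) (p q : M * X) :
  dist_aT p - dist_aT q <= dprod p q.
Proof.
case: p q => [m x] [n y]; rewrite /dist_aT /dprod /=.
have := dist_le1 x (pT X); have := dist_le1 y (pT X).
have := dist_ge0 x (pT X); have := dist_ge0 y (pT X).
have := dist_tri x y (pT X); have := dist_ge0 x y.
by case: m; case: n => /= *; lra.
Qed.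

Lemma half_dist_T_le_dtens (X : tmet) (p q : M * X) (v : X) :
  glue p (Ma, v) -> glue q (Ma, pT X) -> dist v (pT X) / 2 <= dtens p q.
Proof.
have glue_dist_aT := clos_rst_congr (@dist_aT_glue X).
move=> /glue_dist_aT pv /glue_dist_aT qT.
have := dtens_ge (@dist_aT_glue X) (@dist_aT_dprod X) p q.
by rewrite pv qT /dist_aT /= (iffRL (dist_eq0 _ _) erefl) mul0r subr0.
Qed.

Lemma coalg_unfold_a_dist_T (Z : coalg) (K : R) (z w : cobj Z) :
  (forall x y : cobj Z, dtens (cstr x) (cstr y) <= K * dist x y) ->
  glue (cstr z) (Ma, w) -> dist w (pT (cobj Z)) <= 2 * K * dist z (pT (cobj Z)).
Proof.
move=> cstr_lip zw.
have : dist w (pT (cobj Z)) / 2 <= K * dist z (pT (cobj Z)).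
  apply: le_trans (cstr_lip _ _); apply: half_dist_T_le_dtens zw _.
  by case: (cstr_mor Z) => _ [].
lra.
Qed.

Section MaxDist.
Variables (T : eqType) (w : T -> R).

Definition maxdist (x y : T) := if x == y then 0 else Num.max (w x) (w y).

Hypothesis w_ge0 : forall x, 0 <= w x.

Lemma maxdist_ge0 x y : 0 <= maxdist x y.
Proof. by rewrite /maxdist; case: eqP => // _; rewrite le_max w_ge0. Qed.

Lemma maxdist_sym x y : maxdist x y = maxdist y x.
Proof. by rewrite /maxdist eq_sym maxC. Qed.

Lemma le_maxdist x y : x != y -> w x <= maxdist x y.
Proof. by rewrite /maxdist => /negbTE ->; rewrite le_max lexx. Qed.

Lemma maxdist_triangle x y z : maxdist x z <= maxdist x y + maxdist y z.
Proof.
have [-> | xz] := eqVneq x z.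
  by rewrite {1}/maxdist eqxx addr_ge0 ?maxdist_ge0.
have [<- | xy] := eqVneq x y; first by rewrite {2}/maxdist eqxx add0r.
have [<- | yz] := eqVneq y z; first by rewrite {3}/maxdist eqxx addr0.
rewrite {1}/maxdist (negbTE xz) ge_max; apply/andP; split.
  by rewrite ler_wpDr ?maxdist_ge0 ?le_maxdist.
by rewrite ler_wpDl ?maxdist_ge0 // maxdist_sym le_maxdist // eq_sym.
Qed.

Lemma maxdist_le1 : (forall x, w x <= 1) -> forall x y, maxdist x y <= 1.
Proof.
by move=> w_le1 x y; rewrite /maxdist; case: eqP => // _; rewrite ge_max !w_le1.
Qed.

Lemma maxdist_eq0 :
  (forall x y, w x = 0 -> w y = 0 -> x = y) ->
  forall x y, maxdist x y = 0 <-> x = y.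
Proof.
move=> w_eq0 x y; rewrite /maxdist; split; last by move=> ->; rewrite eqxx.
case: eqP => // _ /eqP; rewrite eq_le ge_max => /andP[/andP[wx wy] _].
by apply: w_eq0; apply/eqP; rewrite eq_le ?wx ?wy w_ge0.
Qed.

Lemma maxdist_lipschitz (f : T -> T) (c : R) :
  0 <= c -> (forall x, w (f x) <= c * w x) ->
  forall x y, maxdist (f x) (f y) <= c * maxdist x y.
Proof.
move=> c_ge0 wf x y; have [-> | xy] := eqVneq x y.
  by rewrite /maxdist !eqxx mulr0.
rewrite {2}/maxdist (negbTE xy) /maxdist.
case: eqP => _; first by rewrite mulr_ge0 ?le_max ?w_ge0.
by rewrite ge_max !(le_trans (wf _)) // ler_wpM2l // le_max lexx ?orbT.
Qed.

End MaxDist.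

Inductive pt := pt_T | pt_R | pt_x of nat.

Definition pt_eqb (p q : pt) : bool :=
  match p, q with
  | pt_T, pt_T | pt_R, pt_R => true
  | pt_x m, pt_x n => m == n
  | _, _ => false
  end.

Lemma pt_eqbP : Equality.axiom pt_eqb.
Proof.
by case=> [||m] [||n] /=; try (by constructor); apply: (iffP eqP) => [->|[]].
Qed.

HB.instance Definition _ := hasDecEq.Build pt pt_eqbP.

Definition pt_weight (r : R) (p : pt) :=
  match p with pt_T => 0 | pt_R => 1 | pt_x n => r ^+ n end.

Definition pt_tag (p : pt) : M :=
  match p with pt_x 0 => Mb | pt_R => Mc | _ => Ma end.

Definition pt_pred (p : pt) : pt := if p is pt_x n.+1 then pt_x n else p.

Definition pt_unfold (p : pt) : M * pt := (pt_tag p, pt_pred p).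

Lemma pt_tag_neq (r : R) (p q : pt) : eqM (pt_tag p) (pt_tag q) = false ->
  p != q /\ (pt_weight r p = 1 \/ pt_weight r q = 1).
Proof. by case: p => [||[|m]]; case: q => [||[|n]]; auto. Qed.

Section PointCoalgebra.
Variable r : R.
Hypotheses (r_gt0 : 0 < r) (r_le1 : r <= 1).

Lemma pt_weight_ge0 p : 0 <= pt_weight r p.
Proof. by case: p => [||n] /=; rewrite ?lexx ?ler01 // exprn_ge0 // ltW. Qed.

Lemma pt_weight_le1 p : pt_weight r p <= 1.
Proof. by case: p => [||n] /=; rewrite ?lexx ?ler01 // exprn_ile1 // ltW. Qed.

Lemma pt_weight_eq0 p q : pt_weight r p = 0 -> pt_weight r q = 0 -> p = q.
Proof.
suff wT s : pt_weight r s = 0 -> s = pt_T by move=> /wT -> /wT ->.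
by case: s => [||n] //= /eqP; rewrite ?oner_eq0 // expf_eq0 (gt_eqF r_gt0) andbF.
Qed.

Lemma pt_weight_pred p : pt_weight r (pt_pred p) <= r^-1 * pt_weight r p.
Proof.
have r_inv_ge1 : 1 <= r^-1 by rewrite invf_ge1.
case: p => [||[|n]] /=; rewrite ?mulr0 ?mulr1 //.
by rewrite exprS mulKf ?gt_eqF.
Qed.

Lemma maxdist_pt_x_T n : maxdist (pt_weight r) (pt_x n) pt_T = r ^+ n.
Proof. by rewrite /maxdist /= max_l // exprn_ge0 // ltW. Qed.

Definition pt_space : tmet :=
  @TMet pt (maxdist (pt_weight r)) pt_T (pt_x 0) pt_R
    (maxdist_ge0 pt_weight_ge0) (maxdist_eq0 pt_weight_ge0 pt_weight_eq0)
    (maxdist_sym _) (maxdist_triangle pt_weight_ge0)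
    (maxdist_le1 pt_weight_le1)
    (max_r ler01) (maxxx 1) (max_r ler01) ltac:(by []).

Lemma dprod_pt_unfold p q :
  dprod (X := pt_space) (pt_unfold p) (pt_unfold q)
  <= r^-1 * maxdist (pt_weight r) p q.
Proof.
rewrite /dprod /=; case: ifP => [_ | /(pt_tag_neq r) [pq w1]].
  have r_inv_ge0 : 0 <= r^-1 by rewrite invr_ge0 ltW.
  have := maxdist_lipschitz pt_weight_ge0 r_inv_ge0 pt_weight_pred p q.
  have := maxdist_ge0 pt_weight_ge0 (pt_pred p) (pt_pred q).
  lra.
apply: mulr_ege1; first by rewrite invf_ge1.
by case: w1 => <-; [|rewrite maxdist_sym eq_sym in pq *]; exact: le_maxdist.
Qed.

Lemma pt_unfold_Fmor : is_Fmor (X := pt_space) pt_unfold.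
Proof.
split; last by split; [|split]; exact: rst_refl.
exists r^-1; split; first by rewrite invr_ge0 ltW.
by move=> p q; apply: le_trans (dtens_le_dprod _ _) (dprod_pt_unfold p q).
Qed.

Definition pt_coalg : coalg := Coalg pt_unfold_Fmor.

End PointCoalgebra.

Lemma pow2_le_of_geometric_bounds (u : nat -> R) (K C s : R) :
  0 <= K -> 0 <= s -> 2 * K * s <= 2^-1 -> u 0 = 1 ->
  (forall n, u n <= 2 * K * u n.+1) -> (forall n, u n <= C * s ^+ n) ->
  forall n, 2 ^+ n <= C.
Proof.
move=> K_ge0 s_ge0 Ks u0 u_step u_ub n.
have C_ge0 : 0 <= C by have := u_ub 0%N; rewrite u0 expr0 mulr1; exact: le_trans.
have lb : 1 <= (2 * K) ^+ n * u n.
  elim: n => [|n IHn]; first by rewrite expr0 mul1r u0.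
  apply: le_trans IHn _; rewrite exprSr -mulrA ler_wpM2l ?exprn_ge0 ?mulr_ge0 //.
have : 1 <= C * (2 ^-1) ^+ n.
  apply: le_trans lb _; apply: le_trans (_ : C * (2 * K * s) ^+ n <= _).
    by rewrite [X in _ <= C * X]exprMn mulrCA ler_wpM2l ?exprn_ge0 ?mulr_ge0.
  by rewrite ler_wpM2l // lerXn2r // nnegrE ?invr_ge0 ?mulr_ge0.
by rewrite exprVn ler_pdivlMr ?exprn_gt0 // mul1r.
Qed.

Lemma exists_pow2_gt (C : R) : exists n, C < 2 ^+ n.
Proof.
exists (Num.bound `|C|); apply: le_lt_trans (ler_norm C) _.
apply: lt_trans (archi_boundP (normr_ge0 C)) _.
by rewrite -natrX ltr_nat ltn_expl.
Qed.

Theorem mainTheorem12 : ~ (exists Z : coalg, final Z).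
Proof.
move=> [Z finZ].
have [[K [K_ge0 cstr_lip]] _] := cstr_mor Z.
pose r : R := (4 * (K + 1))^-1.
have r_gt0 : 0 < r by rewrite invr_gt0; lra.
have r_le1 : r <= 1 by rewrite invf_le1; lra.
have [h [[[[C [C_ge0 h_lip]] [hT [hL _]]] h_coalg] _]] :=
  finZ (pt_coalg r_gt0 r_le1).
have [n Cn] := exists_pow2_gt C; suff : 2 ^+ n <= C by rewrite leNgt Cn.
apply: (pow2_le_of_geometric_bounds
  (u := fun k => dist (h (pt_x k)) (pT (cobj Z))) K_ge0 (ltW r_gt0)).
- have : r * (4 * (K + 1)) = 1 by rewrite mulVf //; lra.
  by clearbody r; lra.
- by rewrite /= hL dist_sym dist_TL.
- move=> k; apply: (coalg_unfold_a_dist_T cstr_lip).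
  exact: h_coalg (pt_x k.+1).
- move=> k; rewrite /= -hT; apply: le_trans (h_lip _ _) _.
  by rewrite /= maxdist_pt_x_T.
Qed.
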